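(* Let $(H,\partial)$ be a Cartan–Eilenberg system with associated spectral sequence $(E^r,d^r)_{r\ge1}$. Suppose there are integers $a$ and $b$ such that $d^r_s\colon E^r_s\to E^r_{s-r}$ is zero whenever $s-r\le a$ and $s>b$. Then $\ker(\kappa)=0$, where $\kappa\colon\operatorname{colim}_j\lim_iH(i,j)\to\lim_i\operatorname{colim}_jH(i,j)$ is the interchange morphism.
   Context: Let $\mathcal{A}$ be the abelian category of $\mathbb{Z}$-graded modules over a ring $R$. A Cartan–Eilenberg system $(H,\partial)$ consists of objects $H(i,j)\in\mathcal{A}$ for integers $i\le j$, functorial morphisms $\eta\colon H(i,j)\to H(i',j')$ of internal degree $0$ for $i\le i'$, $j\le j'$, and natural morphisms $\partial\colon H(j,k)\to H(i,j)$ of internal degree $-1$ for $i\le j\le k$ (commuting with $\eta$), such that $H(i,j)\xrightarrow{\eta}H(i,k)\xrightarrow{\eta}H(j,k)\xrightarrow{\partial}H(i,j)$ is exact at each vertex. Its spectral sequence: $E^1_s=H(s-1,s)$; for $r\ge1$, $Z^r_s=\ker(\partial\colon E^1_s\to H(s-r,s-1))$, $B^r_s=\operatorname{im}(\partial\colon H(s,s+r-1)\to E^1_s)$, $E^r_s=Z^r_s/B^r_s$, and $d^r_s\colon E^r_s\to E^r_{s-r}$ is $[x]\mapsto[\partial(\tilde x)]$, where $x\in Z^r_s$, $\tilde x\in H(s-r,s)$ with $\eta(\tilde x)=x$, and $\partial\colon H(s-r,s)\to H(s-r-1,s-r)=E^1_{s-r}$. Limits over $i$ are along $\eta\colon H(i-1,j)\to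 H(i,j)$ as $i\to-\infty$, colimits over $j$ along $\eta\colon H(i,j)\to H(i,j+1)$. The interchange morphism $\kappa$ is the canonical morphism whose restriction to $\lim_iH(i,j)$ followed by projection to $\operatorname{colim}_jH(i,j)$ is $\lim_iH(i,j)\to H(i,j)\to\operatorname{colim}_jH(i,j)$. *)

From HB Require Import structures.
From mathcomp Require Import all_boot all_order all_algebra.
Set Implicit Arguments. Unset Strict Implicit. Unset Printing Implicit Defensive.
Import Order.TTheory GRing.Theory Num.Theory.
Local Open Scope ring_scope.

(* A Z-graded R-module is represented degreewise: [H i j n] is the degree-n
   component of H(i,j).  Morphisms of internal degree 0 act degreewise
   ([eta ... n]); the boundary [del i j k n] goes from degree n of H(j,k) to
   degree n-1 of H(i,j).  The data for indices outside the ranges stated in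
   the paper (i <= j etc.) are present but unconstrained/irrelevant. *)
Record CESystem (R : pzRingType) := {
  H : int -> int -> int -> lmodType R;
  eta : forall (i j i' j' n : int), {linear H i j n -> H i' j' n};
  del : forall (i j k n : int), {linear H j k n -> H i j (n - 1)};
  eta_id : forall i j n (x : H i j n), i <= j -> eta i j i j n x = x;
  eta_comp : forall i j i' j' i'' j'' n (x : H i j n),
    i <= j -> i <= i' -> i' <= i'' -> j <= j' -> j' <= j'' ->
    eta i' j' i'' j'' n (eta i j i' j' n x) = eta i j i'' j'' n x;
  del_nat : forall i j k i' j' k' n (z : H j k n),
    i <= j -> j <= k -> i' <= j' -> j' <= k' ->
    i <= i' -> j <= j' -> k <= k' ->
    eta i j i' j' (n - 1) (del i j k n z) = del i' j' k' n (eta j k j' k' n z);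
  exact_ik : forall i j k n (y : H i k n), i <= j -> j <= k ->
    (eta i k j k n y = 0 <-> exists x : H i j n, eta i j i k n x = y);
  exact_jk : forall i j k n (z : H j k n), i <= j -> j <= k ->
    (del i j k n z = 0 <-> exists y : H i k n, eta i k j k n y = z);
  exact_ij : forall i j k n (x : H i j (n - 1)), i <= j -> j <= k ->
    (eta i j i k (n - 1) x = 0 <-> exists z : H j k n, del i j k n z = x)
}.

Unset Implicit Arguments.

Section SpectralSequence.
Variables (R : pzRingType) (C : CESystem R).

Definition E1 (s n : int) := H C (s - 1) s n.

Definition in_Z (r s n : int) (x : E1 s n) : Prop :=
  del C (s - r) (s - 1) s n x = 0.

Definition in_B (r s n : int) (x : H C (s - 1) s (n - 1)) : Prop :=
  exists y : H C s (s + r - 1) n, del C (s - 1) s (s + r - 1) n y = x.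

(* d^r_s : E^r_s -> E^r_{s-r}, [x] |-> [del xt] for a lift xt in H(s-r,s) of
   x in Z^r_s, is zero: for every x in Z^r_s and every lift xt,
   del xt lies in B^r_{s-r}. *)
Definition dr_zero (r s : int) : Prop :=
  forall (n : int) (x : E1 s n) (xt : H C (s - r) s n),
    in_Z r s n x -> eta C (s - r) s (s - 1) s n xt = x ->
    in_B r (s - r) n (del C (s - r - 1) (s - r) s n xt).

(* An element of (lim_i H(i,j))_n : a family (x_i)_{i <= j}, x_i in H(i,j)_n,
   compatible with eta : H(i-1,j) -> H(i,j).  (Values at i > j are ignored.) *)
Definition lim_family (j n : int) (x : forall i, H C i j n) : Prop :=
  forall i, i <= j -> eta C (i - 1) j i j n (x (i - 1)) = x i.

Definition colim_zero (i j n : int) (y : H C i j n) : Prop :=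
  exists j', j <= j' /\ eta C i j i j' n y = 0.

Definition colim_lim_zero (j n : int) (x : forall i, H C i j n) : Prop :=
  exists j', j <= j' /\ forall i, i <= j -> eta C i j i j' n (x i) = 0.

(* kappa sends the class of x to the family i |-> [x_i] in
   lim_i colim_j H(i,j); it is zero iff every component is zero. *)
Definition kappa_zero (j n : int) (x : forall i, H C i j n) : Prop :=
  forall i, i <= j -> colim_zero i j n (x i).

Definition kappa_injective : Prop :=
  forall (n j : int) (x : forall i, H C i j n),
    lim_family j n x -> kappa_zero j n x -> colim_lim_zero j n x.

End SpectralSequence.

Arguments dr_zero {R} C r s.
Arguments kappa_injective {R} C.

(* An element x = (x_i) of lim_i H(i,j) whose components all die in
   colim_j H(i,j) must die at a single stage J.  Above a fixed level i0 <= a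
   this is automatic, since those x_i are images of x_i0.  Below i0 one
   descends: if y in H(i,J) dies in H(i,K) and in H(i+1,J), then y = del e
   with e in H(J,K), and e lifts to f in H(i+1,K).  Since d^r_s = 0 whenever
   s - r <= a and s > b, the boundary of an element of H(i+1,s) comes from
   H(i+1,s-1); iterating from s = K down to J writes f as an image from
   H(i+1,J) plus an image from H(i,K).  The first part maps to zero in H(J,K)
   through H(J,J) = 0 and the second is killed by del by exactness, so y = 0. *)
From Pilot Require Import Defs.
From HB Require Import structures.
From mathcomp Require Import all_boot all_order all_algebra zify.
Import Order.TTheory GRing.Theory Num.Theory.

Set Implicit Arguments.
Unset Strict Implicit.
Unset Printing Implicit Defensive.

Local Open Scope ring_scope.

Lemma ler_ind_down (P : int -> Prop) (i0 : int) :
  P i0 -> (forall i, i < i0 -> P (i + 1) -> P i) -> forall i, i <= i0 -> P i.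
Proof.
move=> P0 IH i hi; have [k ->] : exists k : nat, i = i0 - k%:Z.
  by exists `|i0 - i|%N; lia.
elim: k {hi} => [|k IHk]; first by rewrite subr0.
by apply: IH; [lia | rewrite (_ : _ + 1 = i0 - k%:Z) //; lia].
Qed.

Section CartanEilenbergSystem.
Variables (R : pzRingType) (C : CESystem R).

Local Notation eta := (Defs.eta C).
Local Notation del := (Defs.del C).

Lemma H_diag_eq0 (i n : int) (y : H C i i n) : y = 0.
Proof.
have [_ y0] := exact_ik (j := i) y (lexx _) (lexx _).
by rewrite -(eta_id y (lexx i)) y0 //; exists y; rewrite eta_id.
Qed.

Lemma del_eta_eq0 (i j k n : int) (y : H C i k n) :
  i <= j -> j <= k -> del i j k n (eta i k j k n y) = 0.
Proof. by move=> ij jk; apply/(exact_jk _ ij jk); exists y. Qed.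

Lemma eta_eq0_up (i j K J n : int) (y : H C i j n) :
  i <= j -> j <= K -> K <= J -> eta i j i K n y = 0 -> eta i j i J n y = 0.
Proof.
move=> ij jK KJ yK0.
by rewrite -(eta_comp (i' := i) (j' := K) y) ?yK0 ?raddf0 //; lia.
Qed.

Lemma lim_family_eta (j n : int) (x : forall i, H C i j n) (i i' : int) :
  lim_family R C j n x -> i <= i' -> i' <= j -> eta i j i' j n (x i) = x i'.
Proof.
move=> xlim + i'j; move: i; apply: ler_ind_down => [|i ii' IH].
  by rewrite eta_id //; lia.
have step : eta i j (i + 1) j n (x i) = x (i + 1).
  by have := xlim (i + 1); rewrite addrK; apply; lia.
by rewrite -(eta_comp (i' := i + 1) (j' := j)) ?step ?IH //; lia.
Qed.

Lemma dr_zero_del_factor (t s : int) :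
  t < s -> dr_zero C (s - t) s -> forall n (f : H C t s n),
  exists w : H C t (s - 1) n, del (t - 1) t s n f = del (t - 1) t (s - 1) n w.
Proof.
move=> ts; rewrite /dr_zero /in_B /in_Z /E1 (_ : s - (s - t) = t); last by lia.
rewrite (_ : t + (s - t) - 1 = s - 1); last by lia.
move=> d0 n f; have [|//|w fw] := d0 n (eta t s (s - 1) s n f) f.
  by apply: del_eta_eq0; lia.
by exists w; rewrite fw.
Qed.

Variables a b : int.
Hypothesis dr_vanish :
  forall r s : int, 1 <= r -> s - r <= a -> b < s -> dr_zero C r s.

Lemma H_decomp_eta (t K q n : int) (f : H C t q n) :
  t <= a -> b <= K -> t <= K -> K <= q ->
  exists (g : H C t K n) (h : H C (t - 1) q n),
    f = eta t K t q n g + eta (t - 1) q t q n h.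
Proof.
move=> ta bK tK Kq; have [k qE] : exists k : nat, q = K + k%:Z.
  by exists `|q - K|%N; lia.
elim: k q qE n f {Kq} => [|k IH] q qE n f.
  rewrite addr0 in qE; subst q.
  by exists f, 0; rewrite raddf0 addr0 eta_id.
have dq : dr_zero C (q - t) q by apply: dr_vanish; lia.
have [|w fw] := dr_zero_del_factor _ dq f; first by lia.
have [|g [h wE]] := IH (q - 1) _ n w; first by lia.
set f' := f - eta t (q - 1) t q n w.
have f'0 : del (t - 1) t q n f' = 0.
  rewrite raddfB /= fw -(del_nat (i := t - 1) (j := t) (k := q - 1));
    try lia.
  by rewrite eta_id ?subrr //; lia.
have [y yE] := (exact_jk (i := t - 1) f' ltac:(lia) ltac:(lia)).1 f'0.
exists g, (y + eta (t - 1) (q - 1) (t - 1) q n h).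
rewrite raddfD /= yE /f' wE raddfD /= !eta_comp; try lia.
suff split (V : zmodType) (u v1 v2 : V) : u = v1 + (u - (v1 + v2) + v2)
  by apply: split.
by rewrite opprD (addrA u) addrNK addrCA subrr addr0.
Qed.

Lemma H_eq0_of_eta_eq0 (i J K n : int) (y : H C i J n) :
  i + 1 <= a -> b <= J -> i + 1 <= J -> J <= K ->
  eta i J i K n y = 0 -> eta i J (i + 1) J n y = 0 -> y = 0.
Proof.
move=> ia bJ iJ JK; move: y; rewrite -(addrK 1 n) => y yK0 yi0.
have [e eE] := (exact_ij (k := K) y ltac:(lia) ltac:(lia)).1 yK0.
have e0 : del (i + 1) J K (n + 1) e = 0.
  by rewrite -(eta_id e JK) -(del_nat (i := i) (j := J) (k := K)) ?eE //; lia.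
have [f fE] := (exact_jk (i := i + 1) e ltac:(lia) ltac:(lia)).1 e0.
have [g [+ +]] := H_decomp_eta f ia bJ iJ JK.
rewrite [i + 1 - 1]addrK => h fE'.
rewrite -eE -fE fE' raddfD /= !eta_comp; try lia.
rewrite -(eta_comp (i' := J) (j' := J) g); try lia.
rewrite (H_diag_eq0 (eta (i + 1) J J J (n + 1) g)) raddf0 add0r.
by apply: del_eta_eq0; lia.
Qed.

End CartanEilenbergSystem.

Theorem proposition5p3 (R : pzRingType) (C : CESystem R) (a b : int) :
  (forall r s : int, 1 <= r -> s - r <= a -> b < s -> dr_zero C r s) ->
  kappa_injective C.
Proof.
move=> dr_vanish n j x xlim xkappa.
pose i0 := Num.min a j.
have [|K0 [jK0 xK0]] := xkappa i0; first by lia.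
pose J := Num.max K0 b.
have above i : i0 <= i -> i <= j -> Defs.eta C i j i J n (x i) = 0.
  move=> i0i ij; rewrite -(lim_family_eta xlim i0i ij) eta_comp; try lia.
  rewrite -(eta_comp (i' := i0) (j' := J)); try lia.
  by rewrite (eta_eq0_up _ _ _ xK0) ?raddf0 //; lia.
exists J; split=> [|i ij]; first by lia.
have [i0i|/ltW ii0] := lerP i0 i; first exact: above.
move: i ii0 {ij}.
apply: (@ler_ind_down (fun i => Defs.eta C i j i J n (x i) = 0)) => [|i ii0 IH].
  by apply: above; lia.
have [|Ki [jKi xKi]] := xkappa i; first by lia.
apply: (H_eq0_of_eta_eq0 dr_vanish (K := Num.max Ki J)); try lia.
  by rewrite eta_comp; try lia; apply: (eta_eq0_up _ _ _ xKi); lia.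
rewrite eta_comp; try lia.
rewrite -(eta_comp (i' := i + 1) (j' := j)); try lia.
by rewrite (lim_family_eta xlim) //; lia.
Qed.
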